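(* Let $u = v$ be a context equation over a ranked signature $\Sigma$ whose letters have maximal arity $k$. Then (1) for every solution $\sigma$ of $u=v$ there is a solution $\sigma'$ that is a simpler equivalent of $\sigma$ such that for each $k'=0,1,\dots,k$, $\sigma'$ uses at most one letter of arity $k'$ that does not occur in $u=v$; (2) for every solution $\sigma$ there exists a solution $\sigma'$ that uses only unary letters occurring in $u = v$ and satisfies $|\sigma'(u)|\le|\sigma(u)|$.
   Context: $\Omega$ is a special constant not in $\Sigma$; context variables have arity $1$, variables arity $0$. Ground terms are finite ordered trees over $\Sigma$ with each node labelled $f$ having $\mathrm{ar}(f)$ children; ground contexts are ground terms over $\Sigma\cup\{\Omega\}$ with exactly one $\Omega$; $st$ replaces $\Omega$ in the ground context $s$ by $t$. Terms are well-formed trees over $\Sigma$, variables and context variables; a context equation is $u=v$ with $u,v$ terms. A substitution $\sigma$ assigns a ground context to each context variable and a ground term to each variable, extended by $\sigma(a)=a$, $\sigma(f(t_1,\dots,t_m))=f(\sigma(t_1),\dots,\sigma(t_m))$, $\sigma(Xt)=\sigma(X)\sigma(t)$; it is a solution if $\sigma(u)=\sigma(v)$. A letter is used by $\sigma$ if it occurs in some $\sigma(X)$ or $\sigma(x)$. For solutions $\sigma,\sigma'$, $\sigma'$ is a simpler equivalent of $\sigma$ if there is an arity-preserving map $h$ on letters such that each $\sigma'(X)$, $\sigma'(x)$ is obtained from $\sigma(X)$, $\sigma(x)$ by replacing every letter $a$ by $h(a)$. $|\cdot|$ is the number of nodes. Unary letters have arity $1$. *)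

From mathcomp Require Import all_boot.
Set Implicit Arguments. Unset Strict Implicit. Unset Printing Implicit Defensive.

(* Ground trees over a signature S extended with the hole constant Omega. *)
Inductive gtree (S : Type) : Type :=
| GHole : gtree S
| GNode : S -> seq (gtree S) -> gtree S.
Arguments GHole {S}.

Section Ground.
Variables (S : Type) (ar : S -> nat).

Fixpoint gwf (t : gtree S) : Prop :=
  match t with
  | GHole => True
  | GNode f ts => size ts = ar f /\
      (fix go (l : seq (gtree S)) : Prop :=
         match l with [::] => True | s :: l' => gwf s /\ go l' end) ts
  end.

Fixpoint holes (t : gtree S) : nat :=
  match t with
  | GHole => 1
  | GNode _ ts => sumn (map holes ts)
  end.

Fixpoint gsize (t : gtree S) : nat :=
  match t with
  | GHole => 1
  | GNode _ ts => (sumn (map gsize ts)).+1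
  end.

Fixpoint gocc (a : S) (t : gtree S) : Prop :=
  match t with
  | GHole => False
  | GNode f ts => f = a \/
      (fix go (l : seq (gtree S)) : Prop :=
         match l with [::] => False | s :: l' => gocc a s \/ go l' end) ts
  end.

Fixpoint plug (s t : gtree S) : gtree S :=
  match s with
  | GHole => t
  | GNode f ss => GNode f (map (fun s' => plug s' t) ss)
  end.

Definition is_ground_term (t : gtree S) : Prop := gwf t /\ holes t = 0.
Definition is_ground_ctx (t : gtree S) : Prop := gwf t /\ holes t = 1.
End Ground.

Fixpoint rename (S : Type) (h : S -> S) (t : gtree S) : gtree S :=
  match t with
  | GHole => GHole
  | GNode f ts => GNode (h f) (map (rename h) ts)
  end.

Inductive term (S V C : Type) : Type :=
| TVar : V -> term S V C
| TCApp : C -> term S V C -> term S V C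
| TNode : S -> seq (term S V C) -> term S V C.

Section Terms.
Variables (S V C : Type) (ar : S -> nat).

Fixpoint twf (t : term S V C) : Prop :=
  match t with
  | TVar _ => True
  | TCApp _ t' => twf t'
  | TNode f ts => size ts = ar f /\
      (fix go (l : seq (term S V C)) : Prop :=
         match l with [::] => True | s :: l' => twf s /\ go l' end) ts
  end.

Fixpoint tocc (a : S) (t : term S V C) : Prop :=
  match t with
  | TVar _ => False
  | TCApp _ t' => tocc a t'
  | TNode f ts => f = a \/
      (fix go (l : seq (term S V C)) : Prop :=
         match l with [::] => False | s :: l' => tocc a s \/ go l' end) ts
  end.

Fixpoint tvocc (x : V) (t : term S V C) : Prop :=
  match t with
  | TVar y => y = x
  | TCApp _ t' => tvocc x t'
  | TNode _ ts =>
      (fix go (l : seq (term S V C)) : Prop :=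
         match l with [::] => False | s :: l' => tvocc x s \/ go l' end) ts
  end.

Fixpoint tcocc (X : C) (t : term S V C) : Prop :=
  match t with
  | TVar _ => False
  | TCApp Y t' => Y = X \/ tcocc X t'
  | TNode _ ts =>
      (fix go (l : seq (term S V C)) : Prop :=
         match l with [::] => False | s :: l' => tcocc X s \/ go l' end) ts
  end.

Record subst : Type := Subst { sv : V -> gtree S; sc : C -> gtree S }.

Definition valid_subst (sg : subst) : Prop :=
  (forall x, is_ground_term ar (sv sg x)) /\ (forall X, is_ground_ctx ar (sc sg X)).

Fixpoint apply_subst (sg : subst) (t : term S V C) : gtree S :=
  match t with
  | TVar x => sv sg x
  | TCApp X t' => plug (sc sg X) (apply_subst sg t')
  | TNode f ts => GNode f (map (apply_subst sg) ts)
  end.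

Definition is_solution (u v : term S V C) (sg : subst) : Prop :=
  valid_subst sg /\ apply_subst sg u = apply_subst sg v.

Definition eq_letter (u v : term S V C) (a : S) : Prop := tocc a u \/ tocc a v.

Definition uses (u v : term S V C) (sg : subst) (a : S) : Prop :=
  (exists x, (tvocc x u \/ tvocc x v) /\ gocc a (sv sg x)) \/
  (exists X, (tcocc X u \/ tcocc X v) /\ gocc a (sc sg X)).

Definition simpler_equiv (sg sg' : subst) : Prop :=
  exists h : S -> S, (forall a, ar (h a) = ar a) /\
    (forall x, sv sg' x = rename h (sv sg x)) /\
    (forall X, sc sg' X = rename h (sc sg X)).
End Terms.

From Stdlib Require List.
From Stdlib Require Import ClassicalEpsilon.
From mathcomp Require Import all_boot.

Set Implicit Arguments. Unset Strict Implicit. Unset Printing Implicit Defensive.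

(* Both parts come from one observation: let F be a transformation of ground
   trees that commutes with plugging into the hole, preserves well-formedness
   and the number of holes, and leaves untouched every node labelled by a
   letter of the equation.  Applying F to every value of a solution sigma gives
   a substitution sigma' with sigma'(t) = F (sigma(t)) for t = u, v, hence again
   a solution.  For (1), F renames every letter outside the equation to a fixed
   representative of its arity; for (2), F splices out every node labelled by
   a unary letter outside the equation, which cannot increase the size. *)

Definition gtree_nested_ind (S : Type) (P : gtree S -> Prop) (P_hole : P GHole)
  (P_node : forall f ts, (forall t, List.In t ts -> P t) -> P (GNode f ts)) :
  forall t, P t :=
  fix IH t := match t with
  | GHole => P_hole
  | GNode f ts => P_node f ts
     ((fix go (l : seq (gtree S)) : forall x, List.In x l -> P x :=
        match l with
        | [::] => fun x H => False_ind _ H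
        | y :: l' => fun x H => match H with
                     | or_introl e => eq_ind y P (IH y) x e
                     | or_intror H' => go l' x H' end
        end) ts)
  end.

Definition term_nested_ind (S V C : Type) (P : term S V C -> Prop)
  (P_var : forall x, P (TVar _ _ x))
  (P_capp : forall X t, P t -> P (TCApp X t))
  (P_node : forall f ts, (forall t, List.In t ts -> P t) -> P (TNode f ts)) :
  forall t, P t :=
  fix IH t := match t with
  | TVar x => P_var x
  | TCApp X t' => P_capp X t' (IH t')
  | TNode f ts => P_node f ts
     ((fix go (l : seq (term S V C)) : forall x, List.In x l -> P x :=
        match l with
        | [::] => fun x H => False_ind _ H
        | y :: l' => fun x H => match H with
                     | or_introl e => eq_ind y P (IH y) x e
                     | or_intror H' => go l' x H' end
        end) ts)
  end.

Lemma leq_sumn_map (A : Type) (F G : A -> nat) (l : seq A) :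
  (forall x, List.In x l -> F x <= G x) -> sumn (map F l) <= sumn (map G l).
Proof.
elim: l => //= a l IH le_FG.
by rewrite leq_add ?IH // => [|x lx]; apply: le_FG; [left | right].
Qed.

Section GroundTrees.
Variables (S : Type) (ar : S -> nat).

Lemma gwf_node f ts :
  gwf ar (GNode f ts) <-> size ts = ar f /\ forall t, List.In t ts -> gwf ar t.
Proof.
rewrite /=; split => -[-> wf_ts]; split => //; elim: ts wf_ts => //= t ts IH.
- by case=> wf_t wf_ts s [<- | sts] //; apply: IH.
- by move=> wf_ts; split; [apply: wf_ts; left | apply: IH => s sts; apply: wf_ts; right].
Qed.

Lemma gocc_node (a f : S) (ts : seq (gtree S)) :
  gocc a (GNode f ts) <-> f = a \/ exists2 t, List.In t ts & gocc a t.
Proof.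
rewrite /=; split => -[-> | occ]; try by left.
- right; elim: ts occ => //= t ts IH [occ_t | /IH [s sts occ_s]].
    by exists t => //; left.
  by exists s => //; right.
- right; case: occ => t; elim: ts => //= s ts IH [-> occ | sts occ]; first by left.
  by right; apply: IH.
Qed.

Lemma rename_plug (h : S -> S) s t :
  rename h (plug s t) = plug (rename h s) (rename h t).
Proof.
elim/gtree_nested_ind: s => //= f ss IH; congr GNode.
by rewrite -!map_comp; apply: List.map_ext_in.
Qed.

Lemma holes_rename (h : S -> S) t : holes (rename h t) = holes t.
Proof.
elim/gtree_nested_ind: t => //= f ts IH.
by rewrite -map_comp; congr sumn; apply: List.map_ext_in.
Qed.

Lemma gwf_rename (h : S -> S) : (forall a, ar (h a) = ar a) ->
  forall t, gwf ar t -> gwf ar (rename h t).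
Proof.
move=> ar_h; elim/gtree_nested_ind => //= f ts IH /gwf_node [size_ts wf_ts].
apply/gwf_node; rewrite size_map ar_h; split => // s /List.in_map_iff [t [<- tts]].
exact: IH tts (wf_ts t tts).
Qed.

Lemma rename_occ (h : S -> S) a t :
  gocc a (rename h t) -> exists2 b, gocc b t & h b = a.
Proof.
elim/gtree_nested_ind: t => //= f ts IH /gocc_node [<- | [s]].
  by exists f => //; apply/gocc_node; left.
move=> /List.in_map_iff [t [<- tts]] /(IH t tts) [b occ_b <-].
by exists b => //; apply/gocc_node; right; exists t.
Qed.

End GroundTrees.

Fixpoint erase (S : Type) (D : pred S) (t : gtree S) : gtree S :=
  match t with
  | GHole => GHole
  | GNode f ts =>
      if D f then
        if ts is [:: t'] then erase D t' else GNode f (map (erase D) ts)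
      else GNode f (map (erase D) ts)
  end.

Section Erase.
Variables (S : Type) (ar : S -> nat) (D : pred S).

Lemma erase_node f ts : ~~ D f -> erase D (GNode f ts) = GNode f (map (erase D) ts).
Proof. by move=> /negbTE /= ->. Qed.

Lemma erase_plug s t : erase D (plug s t) = plug (erase D s) (erase D t).
Proof.
elim/gtree_nested_ind: s => //= f ss IH.
have erase_ss : map (erase D) (map (fun s => plug s t) ss)
              = map (fun s => plug s (erase D t)) (map (erase D) ss).
  by rewrite -!map_comp; apply: List.map_ext_in.
case: (D f) => /=; last by rewrite erase_ss.
case: ss IH erase_ss => [|s [|s' ss]] IH //= erase_ss; last by rewrite erase_ss.
by apply: IH; left.
Qed.

Lemma holes_erase t : holes (erase D t) = holes t.
Proof.
elim/gtree_nested_ind: t => //= f ts IH.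
have holes_ts : sumn (map (@holes S) (map (erase D) ts)) = sumn (map (@holes S) ts).
  by rewrite -map_comp; congr sumn; apply: List.map_ext_in.
case: (D f) => //; case: ts IH holes_ts => [|t [|t' ts]] IH //= _.
by rewrite !addn0; apply: IH; left.
Qed.

Lemma gsize_erase t : gsize (erase D t) <= gsize t.
Proof.
elim/gtree_nested_ind: t => //= f ts IH.
have le_ts : sumn (map (@gsize S) (map (erase D) ts)) <= sumn (map (@gsize S) ts).
  by rewrite -map_comp; apply: leq_sumn_map.
case: (D f) => //; case: ts IH le_ts => [|t [|t' ts]] IH le_ts //=.
by rewrite addn0 ltnW // ltnS; apply: IH; left.
Qed.

Lemma gwf_erase t : gwf ar t -> gwf ar (erase D t).
Proof.
have wf_map f ts : size ts = ar f -> (forall t, List.In t ts -> gwf ar (erase D t)) ->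
    gwf ar (GNode f (map (erase D) ts)).
  move=> size_ts wf_ts; apply/gwf_node; rewrite size_map; split => //.
  by move=> s /List.in_map_iff [r [<- rts]]; apply: wf_ts.
elim/gtree_nested_ind: t => //= f ts IH /gwf_node [size_ts wf_ts].
have {wf_ts}IH t : List.In t ts -> gwf ar (erase D t) by move=> tts; apply: IH (wf_ts t tts).
case: (D f); last exact: wf_map.
case: ts size_ts IH => [|t [|t' ts]] size_ts IH; try exact: wf_map.
by apply: IH; left.
Qed.

Hypothesis D_unary : forall a, D a -> ar a = 1.

Lemma erase_occ a t : gwf ar t -> gocc a (erase D t) -> ~~ D a.
Proof.
elim/gtree_nested_ind: t => //= f ts IH /gwf_node [size_ts wf_ts].
case Df: (D f).
  rewrite D_unary // in size_ts.
  case: ts size_ts IH wf_ts => [|t [|]] //= _ IH wf_t.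
  by apply: IH; [left | apply: wf_t; left].
move=> /gocc_node [<- | [s /List.in_map_iff [t [<- tts]]]]; first by rewrite Df.
exact: IH tts (wf_ts t tts).
Qed.

End Erase.

Section MapSubst.
Variables (S V C : Type) (ar : S -> nat).

Lemma tocc_node (a f : S) (ts : seq (term S V C)) :
  tocc a (TNode f ts) <-> f = a \/ exists2 t, List.In t ts & tocc a t.
Proof.
rewrite /=; split => -[-> | occ]; try by left.
- right; elim: ts occ => //= t ts IH [occ_t | /IH [s sts occ_s]].
    by exists t => //; left.
  by exists s => //; right.
- right; case: occ => t; elim: ts => //= s ts IH [-> occ | sts occ]; first by left.
  by right; apply: IH.
Qed.

Definition map_subst (F : gtree S -> gtree S) (sg : subst S V C) : subst S V C :=
  Subst (fun x => F (sv sg x)) (fun X => F (sc sg X)).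

Variable F : gtree S -> gtree S.
Hypothesis F_plug : forall s t, F (plug s t) = plug (F s) (F t).

Lemma apply_map_subst sg t :
  (forall f ts, tocc f t -> F (GNode f ts) = GNode f (map F ts)) ->
  apply_subst (map_subst F sg) t = F (apply_subst sg t).
Proof.
elim/term_nested_ind: t => //= [X t IH | f ts IH] F_node; first by rewrite IH // F_plug.
rewrite F_node; last by left.
congr GNode; rewrite -map_comp; apply: List.map_ext_in => t tts /=.
apply: IH => // g us occ_g; apply: F_node.
by apply/tocc_node; right; exists t.
Qed.

Hypotheses (F_wf : forall t, gwf ar t -> gwf ar (F t))
           (F_holes : forall t, holes (F t) = holes t).

Lemma valid_map_subst sg : valid_subst ar sg -> valid_subst ar (map_subst F sg).
Proof.
case=> sv_ground sc_ground; split=> [x | X].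
- by case: (sv_ground x) => wf_x holes_x; split; [apply: F_wf | rewrite /= F_holes].
- by case: (sc_ground X) => wf_X holes_X; split; [apply: F_wf | rewrite /= F_holes].
Qed.

Variables u v : term S V C.
Hypothesis F_node : forall f ts, eq_letter u v f -> F (GNode f ts) = GNode f (map F ts).

Lemma solution_map_subst sg : is_solution ar u v sg -> is_solution ar u v (map_subst F sg).
Proof.
case=> valid_sg sg_uv; split; first exact: valid_map_subst.
rewrite !apply_map_subst ?sg_uv // => f ts occ_f; apply: F_node; [right | left]; done.
Qed.

Lemma used_map_subst sg a : valid_subst ar sg -> uses u v (map_subst F sg) a ->
  exists2 t, gwf ar t & gocc a (F t).
Proof.
case=> sv_ground sc_ground [[x [_ occ]] | [X [_ occ]]].
  by exists (sv sg x) => //; case: (sv_ground x).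
by exists (sc sg X) => //; case: (sc_ground X).
Qed.

End MapSubst.

(* Letters of E are fixed; any other letter goes to a letter outside E of the
   same arity, and the choice depends only on that arity. *)
Definition canon_letter (S : Type) (ar : S -> nat) (E : S -> Prop) (a : S) : S :=
  if excluded_middle_informative (E a) then a
  else epsilon (inhabits a) (fun b => ar b = ar a /\ ~ E b).

Section CanonLetter.
Variables (S : Type) (ar : S -> nat) (E : S -> Prop).
Local Notation canon := (canon_letter ar E).

Lemma canon_letter_id a : E a -> canon a = a.
Proof. by rewrite /canon_letter; case: excluded_middle_informative. Qed.

Lemma ar_canon_letter a : ar (canon a) = ar a.
Proof.
rewrite /canon_letter; case: excluded_middle_informative => // nEa.
have ex_a : exists b, ar b = ar a /\ ~ E b by exists a.
by case: (epsilon_spec (inhabits a) _ ex_a).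
Qed.

Lemma eq_canon_letter a b :
  ~ E (canon a) -> ~ E (canon b) -> ar (canon a) = ar (canon b) -> canon a = canon b.
Proof.
have canon_out c : ~ E (canon c) ->
    canon c = epsilon (inhabits c) (fun b => ar b = ar c /\ ~ E b).
  by rewrite /canon_letter; case: excluded_middle_informative.
have outside c : ~ E (canon c) -> ~ E c by move=> nEc Ec; rewrite canon_letter_id in nEc.
move=> nEa nEb; rewrite !ar_canon_letter => ar_ab.
rewrite (canon_out a) // (canon_out b) // ar_ab.
by apply: epsilon_inh_irrelevance; exists b; split => //; apply: outside.
Qed.

End CanonLetter.

Section SimplerSolutions.
Variables (S V C : Type) (ar : S -> nat) (u v : term S V C).

Lemma rename_solution (h : S -> S) sg :
  (forall a, ar (h a) = ar a) -> (forall a, eq_letter u v a -> h a = a) ->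
  is_solution ar u v sg ->
  is_solution ar u v (map_subst (rename h) sg) /\
  simpler_equiv ar sg (map_subst (rename h) sg).
Proof.
move=> ar_h h_id sol_sg; split; last by exists h.
apply: solution_map_subst sol_sg.
- exact: rename_plug.
- exact: gwf_rename.
- exact: holes_rename.
- by move=> f ts /h_id /= ->.
Qed.

Lemma used_rename (h : S -> S) sg a : valid_subst ar sg ->
  uses u v (map_subst (rename h) sg) a -> exists b, h b = a.
Proof.
move=> valid_sg used_a; have [t _ occ_a] := used_map_subst valid_sg used_a.
by have [b _ <-] := rename_occ occ_a; exists b.
Qed.

Lemma erase_solution (D : pred S) sg :
  (forall a, D a -> ar a = 1) -> (forall a, eq_letter u v a -> ~~ D a) ->
  is_solution ar u v sg ->
  [/\ is_solution ar u v (map_subst (erase D) sg),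
      forall a, uses u v (map_subst (erase D) sg) a -> ~~ D a &
      gsize (apply_subst (map_subst (erase D) sg) u) <= gsize (apply_subst sg u)].
Proof.
move=> D_unary D_out sol_sg.
have erase_eq_node f ts : eq_letter u v f ->
    erase D (GNode f ts) = GNode f (map (erase D) ts).
  by move/D_out; apply: erase_node.
split.
- apply: solution_map_subst sol_sg => //; [exact: erase_plug | exact: gwf_erase |].
  exact: holes_erase.
- move=> a used_a; have [t wf_t occ_a] := used_map_subst (proj1 sol_sg) used_a.
  exact: erase_occ D_unary _ _ wf_t occ_a.
- rewrite apply_map_subst; [exact: gsize_erase | exact: erase_plug |].
  by move=> f ts occ_f; apply: erase_eq_node; left.
Qed.

End SimplerSolutions.

Theorem lemma3p7 (S V C : Type) (ar : S -> nat) (k : nat)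
  (hk : forall a : S, ar a <= k)
  (u v : term S V C) (hu : twf ar u) (hv : twf ar v) :
  (forall sg : subst S V C, is_solution ar u v sg ->
     exists sg' : subst S V C,
       is_solution ar u v sg' /\ simpler_equiv ar sg sg' /\
       (forall k', k' <= k -> forall a b : S,
          uses u v sg' a -> uses u v sg' b ->
          ~ eq_letter u v a -> ~ eq_letter u v b ->
          ar a = k' -> ar b = k' -> a = b)) /\
  (forall sg : subst S V C, is_solution ar u v sg ->
     exists sg' : subst S V C,
       is_solution ar u v sg' /\
       (forall a : S, ar a = 1 -> uses u v sg' a -> eq_letter u v a) /\
       gsize (apply_subst sg' u) <= gsize (apply_subst sg u)).
Proof.
split=> sg sol_sg.
- pose h := canon_letter ar (eq_letter u v).
  have [sol_h simpler_h] :=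
    rename_solution (ar_canon_letter ar _) (@canon_letter_id _ ar _) sol_sg.
  exists (map_subst (rename h) sg); do 2 split=> //.
  move=> k' _ a b used_a used_b nEa nEb ar_a ar_b.
  have [c def_a] := used_rename (proj1 sol_sg) used_a.
  have [d def_b] := used_rename (proj1 sol_sg) used_b.
  rewrite -def_a -def_b in nEa nEb ar_a ar_b *.
  by apply: eq_canon_letter => //; rewrite ar_a ar_b.
- pose D a := if excluded_middle_informative (ar a = 1 /\ ~ eq_letter u v a)
              then true else false.
  have D_unary a : D a -> ar a = 1.
    by rewrite /D; case: excluded_middle_informative => // -[].
  have D_out a : eq_letter u v a -> ~~ D a.
    by rewrite /D; case: excluded_middle_informative => // -[].
  have [sol_D unused_D le_size] := erase_solution D_unary D_out sol_sg.
  exists (map_subst (erase D) sg); split=> //; split=> // a ar_a /unused_D.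
  rewrite /D; case: excluded_middle_informative => // notD _.
  by apply: NNPP => nEa; apply: notD.
Qed.
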